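(* Let $G$ be a simple graph with $m\ge 1$ edges and let $G'$ be an induced subgraph of $G$ formed by some blocks of $G$, with $m'\ge1$ edges. Then $\lambda_i(G)\ge\lambda_i(G')\ge\lambda_{m-m'+i}(G)$ for every $1\le i\le m'$.
   Context: A block of $G$ is a maximal connected induced subgraph without cut vertices. For an oriented edge $e$ write $e^-$ for its tail and $e^+$ for its head. For distinct edges $e,e'$: $e\leftrightarrow e'$ means $e^+=e'^-$ or $e'^+=e^-$; $e\overset{\pm}{\sim}e'$ means $e^+=e'^+$ or $e^-=e'^-$; $e\vartriangle e'$ means $e,e'$ are two edges of a common triangle. $\triangle(e)$ is the number of triangles containing $e$ in the graph under consideration. The Helmholtzian matrix $\mathcal{H}(G)=(h_{ee'})$ is indexed by edges, with $h_{ee}=\triangle(e)+2$, and for $e\ne e'$: $h_{ee'}=-1$ if $e\leftrightarrow e'$ and not $e\vartriangle e'$; $h_{ee'}=1$ if $e\overset{\pm}{\sim}e'$ and not $e\vartriangle e'$; $h_{ee'}=0$ otherwise. $\lambda_1(G)\ge\cdots\ge\lambda_m(G)$ are the eigenvalues of $\mathcal{H}(G)$ for an arbitrary edge orientation (independent of the orientation). *)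

From HB Require Import structures.
From mathcomp Require Import all_boot all_order all_algebra.
Set Implicit Arguments. Unset Strict Implicit. Unset Printing Implicit Defensive.
Import Order.TTheory GRing.Theory Num.Theory.
Local Open Scope ring_scope.

Section Graphs.
Variable T : finType.

Definition simple_graph (adj : rel T) : Prop :=
  irreflexive adj /\ symmetric adj.

Definition induced_adj (adj : rel T) (A : {set T}) : rel T :=
  [rel x y | [&& adj x y, x \in A & y \in A]].

Definition connected_in (adj : rel T) (A : {set T}) : bool :=
  (A != set0) &&
  [forall x in A, forall y in A, connect (induced_adj adj A) x y].

Definition no_cut_vertex (adj : rel T) (A : {set T}) : bool :=
  [forall v in A, forall x in A :\ v, forall y in A :\ v,
     connect (induced_adj adj (A :\ v)) x y].

Definition is_block (adj : rel T) (B : {set T}) : bool :=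
  maxset (fun A : {set T} => connected_in adj A && no_cut_vertex adj A) B.

Definition formed_by_blocks (adj : rel T) (S : {set T}) : Prop :=
  exists Bs : {set {set T}},
    [/\ (forall B, B \in Bs -> is_block adj B),
        S = \bigcup_(B in Bs) B &
        forall x y, x \in S -> y \in S -> adj x y ->
          exists2 B, B \in Bs & (x \in B) && (y \in B)].

Definition orientation (adj : rel T) (o : rel T) : Prop :=
  forall x y, adj x y -> o x y != o y x.

(* Oriented edges (tail, head) of the induced subgraph G[S]. *)
Definition oedges (adj o : rel T) (S : {set T}) : {set T * T} :=
  [set e : T * T | [&& adj e.1 e.2, o e.1 e.2, e.1 \in S & e.2 \in S]].

Definition ntri (adj : rel T) (S : {set T}) (e : T * T) : nat :=
  #|[set w | [&& w \in S, adj e.1 w & adj e.2 w]]|.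

Definition ehead_tail (e e' : T * T) : bool := (e.2 == e'.1) || (e'.2 == e.1).
Definition esame_end (e e' : T * T) : bool := (e.2 == e'.2) || (e.1 == e'.1).
(* e and e' are two edges of a common triangle (of G[S]; endpoints of edges of
   G[S] lie in S). *)
Definition etri (adj : rel T) (e e' : T * T) : bool :=
  let V := [set e.1; e.2; e'.1; e'.2] in
  (#|V| == 3) && [forall x in V, forall y in V, (x != y) ==> adj x y].

End Graphs.

Section Helm.
Variables (R : numDomainType) (T : finType).

Definition helmholtzian (adj o : rel T) (S : {set T}) :
    'M[R]_#|oedges adj o S| :=
  \matrix_(i, j)
    let e  := enum_val i in
    let e' := enum_val j in
    if i == j then (ntri adj S e)%:R + 2
    else if ehead_tail e e' && ~~ etri adj e e' then -1
    else if esame_end e e' && ~~ etri adj e e' then 1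
    else 0.
End Helm.

(* s is the list of eigenvalues of A (with multiplicity) in nonincreasing
   order: lambda_1 >= ... >= lambda_n. *)
Definition spectrum (R : realDomainType) (n : nat) (A : 'M[R]_n) (s : seq R)
  : Prop :=
  sorted (fun x y : R => y <= x) s /\
  char_poly A = \prod_(x <- s) ('X - x%:P).

(* The Helmholtzian of G' is a principal submatrix of that of G:
   its off-diagonal entries only depend on the two edges, and its diagonal
   entries count triangles, which agree because a common neighbour w of the two
   ends of an edge of a block B lies in B (otherwise w |: B would still be
   connected without cut vertex, against maximality).  Cauchy interlacing for a
   principal submatrix B of a symmetric A then follows from a dimension count:
   if #{eigenvalues of A <= lam} + #{eigenvalues of B >= mu} exceeds the size
   of A, the two corresponding spans of eigenvectors meet, and the Rayleigh
   quotient of a common vector is both <= lam and >= mu.  Real symmetric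
   matrices are diagonalised through their (Hermitian) complexification. *)

From HB Require Import structures.
From mathcomp Require Import all_boot all_order all_algebra.
From mathcomp Require Import sesquilinear spectral complex zify.
Import Order.TTheory GRing.Theory Num.Theory.
Set Implicit Arguments. Unset Strict Implicit. Unset Printing Implicit Defensive.
Local Open Scope ring_scope.
Local Open Scope sesquilinear_scope.

Section SortedCount.
Variables (T : Type) (leT : rel T).
Hypotheses (leT_tr : transitive leT) (leT_refl : reflexive leT).

Lemma count_sorted_nth x0 (s : seq T) i : sorted leT s -> (i < size s)%N ->
  (size s - i <= count (leT (nth x0 s i)) s)%N.
Proof.
move=> s_sorted lt_i_s; set p := leT _.
have : all p (drop i s).
  have := drop_sorted i s_sorted; rewrite (drop_nth x0 lt_i_s) /= {1}/p leT_refl.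
  exact: order_path_min.
rewrite all_count size_drop => /eqP <-.
by rewrite -[in X in (_ <= X)%N](cat_take_drop i s) count_cat leq_addl.
Qed.

End SortedCount.

Section NonincreasingCount.
Variable R : realDomainType.
Variables (s : seq R) (i : nat).
Hypotheses (s_sorted : sorted (fun x y => y <= x) s) (lt_i_s : (i < size s)%N).

Lemma count_le_nth : (size s - i <= count (fun x => x <= nth 0 s i)%R s)%N.
Proof.
apply: (count_sorted_nth (leT := fun x y => y <= x)) => //= y x z le_xy le_zx.
exact: le_trans le_zx le_xy.
Qed.

Lemma count_ge_nth : (i.+1 <= count (fun x => nth 0 s i <= x)%R s)%N.
Proof.
have rev_sorted_le : sorted <=%R (rev s) by rewrite rev_sorted.
have lt_j : (size s - i.+1 < size s)%N by lia.
have := count_sorted_nth (@le_trans _ R) (@lexx _ R) 0 rev_sorted_le.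
rewrite size_rev => /(_ _ lt_j); rewrite count_rev nth_rev //.
have -> : (size s - (size s - i.+1).+1 = i)%N by lia.
by rewrite subKn.
Qed.

End NonincreasingCount.

Section Congruence.
Variable C : numClosedFieldType.

Definition congrmx m n (N : 'M[C]_(m, n)) (A : 'M[C]_n) : 'M[C]_m := N *m A *m N^t*.

Lemma congrmxM m n p (M : 'M[C]_(m, n)) (N : 'M_(n, p)) A :
  congrmx (M *m N) A = congrmx M (congrmx N A).
Proof. by rewrite /congrmx trmx_mul map_mxM !mulmxA. Qed.

Lemma congrmxN m n (N : 'M[C]_(m, n)) A : congrmx N (- A) = - congrmx N A.
Proof. by rewrite /congrmx mulmxN mulNmx. Qed.

Lemma congrmx_rowsub1 m n (f : 'I_m -> 'I_n) A :
  congrmx (rowsub f (1%:M : 'M[C]_n)) A = mxsub f f A.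
Proof.
rewrite /congrmx.
have -> : (rowsub f 1%:M)^t* = colsub f 1%:M :> 'M[C]_(n, m).
  by apply/matrixP => i j; rewrite !mxE eq_sym conjC_nat.
by rewrite -rowsubE mulmx_colsub mulmx1 -mxsubcr.
Qed.

Lemma mxsub_scalar m n (f : 'I_m -> 'I_n) (a : C) : injective f ->
  mxsub f f a%:M = a%:M.
Proof. by move=> f_inj; apply/matrixP => i j; rewrite !mxE (inj_eq f_inj). Qed.

Lemma mxsub_diag m n (f : 'I_m -> 'I_n) (d : 'rV[C]_n) : injective f ->
  mxsub f f (diag_mx d) = diag_mx (colsub f d).
Proof. by move=> f_inj; apply/matrixP => i j; rewrite !mxE (inj_eq f_inj). Qed.

Lemma rowsub1_unitary m n (f : 'I_m -> 'I_n) : injective f ->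
  rowsub f (1%:M : 'M[C]_n) \is unitarymx.
Proof.
move=> f_inj; apply/unitarymxP.
by have := congrmx_rowsub1 f (1%:M : 'M[C]_n); rewrite /congrmx mulmx1 mxsub_scalar.
Qed.

Lemma congrmx_diag_rowspace k n (X : 'M[C]_(k, n)) A r (D : 'rV_k) :
  congrmx X A = diag_mx r ->
  congrmx (D *m X) A 0 0 = \sum_j D 0 j * (D 0 j)^* * r 0 j.
Proof.
rewrite congrmxM => ->; rewrite /congrmx mul_mx_diag !mxE.
by apply: eq_bigr => j _; rewrite !mxE mulrAC.
Qed.

Lemma congrmx1_rowspace k n (X : 'M[C]_(k, n)) (D : 'rV_k) :
  X \is unitarymx -> congrmx (D *m X) 1%:M 0 0 = \sum_j D 0 j * (D 0 j)^*.
Proof.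
move=> /unitarymxP X_unitary.
have X1 : congrmx X 1%:M = diag_mx (const_mx 1).
  by rewrite diag_const_mx /congrmx mulmx1.
rewrite (congrmx_diag_rowspace D X1).
by apply: eq_bigr => j _; rewrite mxE mulr1.
Qed.

Section Rayleigh.
Variables (k n : nat) (X : 'M[C]_(k, n)) (A : 'M[C]_n) (r : 'rV[C]_k).
Hypotheses (X_unitary : X \is unitarymx) (XAX : congrmx X A = diag_mx r).

Lemma rayleigh_le lam (v : 'rV_n) : (forall j, r 0 j <= lam) -> (v <= X)%MS ->
  congrmx v A 0 0 <= lam * congrmx v 1%:M 0 0.
Proof.
move=> r_le /submxP[D ->].
rewrite (congrmx_diag_rowspace D XAX) congrmx1_rowspace // mulr_sumr.
apply: ler_sum => j _; rewrite [leRHS]mulrC ler_wpM2l ?mul_conjC_ge0 //.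
Qed.

Lemma rayleigh_ge mu (v : 'rV_n) : (forall j, mu <= r 0 j) -> (v <= X)%MS ->
  mu * congrmx v 1%:M 0 0 <= congrmx v A 0 0.
Proof.
move=> r_ge /submxP[D ->].
rewrite (congrmx_diag_rowspace D XAX) congrmx1_rowspace // mulr_sumr.
apply: ler_sum => j _; rewrite [leLHS]mulrC ler_wpM2l ?mul_conjC_ge0 //.
Qed.

End Rayleigh.

Lemma le_of_unitary_diag_congr k l n (X : 'M[C]_(k, n)) (Y : 'M[C]_(l, n)) A
    (r : 'rV_k) (r' : 'rV_l) lam mu :
  (n < k + l)%N -> X \is unitarymx -> Y \is unitarymx ->
  congrmx X A = diag_mx r -> congrmx Y A = diag_mx r' ->
  (forall j, r 0 j <= lam) -> (forall j, mu <= r' 0 j) -> mu <= lam.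
Proof.
move=> lt_n_kl X_unitary Y_unitary XAX YAY r_le r'_ge.
have : (X :&: Y)%MS != 0.
  rewrite -mxrank_eq0 -lt0n.
  have := mxrank_sum_cap X Y; have := rank_leq_col (X + Y)%MS.
  rewrite (mxrank_unitary X_unitary) (mxrank_unitary Y_unitary); lia.
case/rowV0Pn => v; rewrite sub_capmx => /andP[vX vY] v_neq0.
have vv_gt0 : 0 < congrmx v 1%:M 0 0.
  by rewrite /congrmx mulmx1 -dotmxE dotmx_is_dotmx.
rewrite -(ler_pM2r vv_gt0).
exact: le_trans (rayleigh_ge Y_unitary YAY r'_ge vY)
                (rayleigh_le X_unitary XAX r_le vX).
Qed.

Lemma congrmx_spectral n (A : 'M[C]_n) : A \is normalmx ->
  congrmx (spectralmx A) A = diag_mx (spectral_diag A).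
Proof.
have P_unitary := spectral_unitarymx A.
move=> /orthomx_spectralP; set P := spectralmx A; set d := spectral_diag A => ->.
rewrite /congrmx invmx_unitary // !mulmxA (unitarymxP P_unitary) mul1mx.
exact: mulmxtVK.
Qed.

Theorem interlacing_count n m (A : 'M[C]_n) (E : 'M_(m, n)) (P : 'M_n) (Q : 'M_m)
    (d : 'rV_n) (e : 'rV_m) (lam mu : C) :
  E \is unitarymx -> P \is unitarymx -> Q \is unitarymx ->
  congrmx P A = diag_mx d -> congrmx Q (congrmx E A) = diag_mx e ->
  (n < #|[set k | (d 0 k <= lam)%R]| + #|[set k | (mu <= e 0 k)%R]|)%N ->
  mu <= lam.
Proof.
move=> E_unitary P_unitary Q_unitary PAP QBQ.
set K := [set k | _ <= lam]; set K' := [set k | mu <= _] => card_gt.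
pose f := @enum_val _ (mem K); pose g := @enum_val _ (mem K').
have f_inj : injective f by exact: enum_val_inj.
have g_inj : injective g by exact: enum_val_inj.
apply: (le_of_unitary_diag_congr (A := A) (X := rowsub f 1%:M *m P)
  (Y := rowsub g 1%:M *m Q *m E) (r := colsub f d) (r' := colsub g e) card_gt).
- by rewrite mul_unitarymx ?rowsub1_unitary.
- by rewrite !mul_unitarymx ?rowsub1_unitary.
- by rewrite congrmxM PAP congrmx_rowsub1 mxsub_diag.
- by rewrite !congrmxM QBQ congrmx_rowsub1 mxsub_diag.
- by move=> j; rewrite mxE; have := enum_valP j; rewrite inE.
- by move=> j; rewrite mxE; have := enum_valP j; rewrite inE.
Qed.

Corollary interlacing_count_opp n m (A : 'M[C]_n) (E : 'M_(m, n)) (P : 'M_n)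
    (Q : 'M_m) (d : 'rV_n) (e : 'rV_m) (lam mu : C) :
  E \is unitarymx -> P \is unitarymx -> Q \is unitarymx ->
  congrmx P A = diag_mx d -> congrmx Q (congrmx E A) = diag_mx e ->
  (n < #|[set k | (lam <= d 0 k)%R]| + #|[set k | (e 0 k <= mu)%R]|)%N ->
  lam <= mu.
Proof.
move=> E_unitary P_unitary Q_unitary PAP QBQ card_gt; rewrite -lerN2.
apply: (interlacing_count (A := - A) (d := - d) (e := - e)
         E_unitary P_unitary Q_unitary).
- by rewrite congrmxN PAP raddfN.
- by rewrite !congrmxN QBQ raddfN.
by congr (_ < _ + _)%N: card_gt; apply: eq_card => k; rewrite !inE !mxE lerN2.
Qed.

End Congruence.

Lemma char_poly_conj (F : fieldType) n (P M : 'M[F]_n) : P \in unitmx ->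
  char_poly (invmx P *m M *m P) = char_poly M.
Proof.
move=> P_unit; rewrite /char_poly /char_poly_mx !map_mxM.
set Pi := map_mx polyC (invmx P); set P' := map_mx polyC P.
have PiP : Pi *m P' = 1%:M by rewrite -map_mxM mulVmx // map_mx1.
have -> : 'X%:M - Pi *m map_mx polyC M *m P' = Pi *m ('X%:M - map_mx polyC M) *m P'.
  by rewrite mulmxBr mulmxBl scalar_mxC -[(_%:M *m _) *m _]mulmxA PiP mulmx1.
by rewrite !det_mulmx mulrAC -det_mulmx PiP det1 mul1r.
Qed.

Lemma char_poly_spectral (C : numClosedFieldType) n (A : 'M[C]_n) :
  A \is normalmx -> char_poly A = \prod_k ('X - (spectral_diag A 0 k)%:P).
Proof.
move=> /orthomx_spectralP {1}->.
rewrite char_poly_conj ?spectral_unit // char_poly_trig ?diag_mx_is_trig //.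
by apply: eq_bigr => k _; rewrite mxE eqxx mulr1n.
Qed.

Lemma size_spectrum (R : realDomainType) n (A : 'M[R]_n) s :
  spectrum A s -> size s = n.
Proof.
by case=> _ charA; have := size_char_poly A; rewrite charA size_prod_XsubC => -[].
Qed.

Lemma card_set_count (T : finType) (p : pred T) :
  #|[set x | p x]| = count p (enum T).
Proof. by rewrite cardsE -sum1_card -sum1_count big_enum_cond. Qed.

Section CauchyInterlacing.
Variable R : rcfType.
Local Notation toC := (real_complex R).
Local Notation cplx := (map_mx toC).

Lemma cplx_normalmx n (H : 'M[R]_n) : H^T = H -> cplx H \is normalmx.
Proof.
move=> H_sym; suff H_herm : (cplx H)^t* = cplx H by apply/normalmxP; rewrite H_herm.
apply/matrixP => i j; rewrite !mxE -[in RHS]H_sym mxE.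
exact: conjc_real.
Qed.

Lemma card_spectral_diag n (H : 'M[R]_n) s (p : pred R[i]) :
  H^T = H -> spectrum H s ->
  #|[set k | p (spectral_diag (cplx H) 0 k)]| = count (p \o toC) s.
Proof.
move=> H_sym [_ charH].
have spec_perm :
    perm_eq (map toC s) [seq spectral_diag (cplx H) 0 k | k <- enum 'I_n].
  apply: prod_XsubC_eq; rewrite !big_map -map_prod_XsubC -charH map_char_poly.
  by rewrite char_poly_spectral ?cplx_normalmx // big_enum.
by rewrite card_set_count -[RHS](count_map toC p) (permP spec_perm) [RHS]count_map.
Qed.

Lemma card_spectral_diag_le n (H : 'M[R]_n) s (lam : R) :
  H^T = H -> spectrum H s ->
  #|[set k | (spectral_diag (cplx H) 0 k <= toC lam)%R]| =
  count (fun x => x <= lam)%R s.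
Proof.
move=> H_sym spH; rewrite (card_spectral_diag (fun z => z <= toC lam) H_sym spH).
by apply: eq_count => x /=; rewrite lecR.
Qed.

Lemma card_spectral_diag_ge n (H : 'M[R]_n) s (lam : R) :
  H^T = H -> spectrum H s ->
  #|[set k | (toC lam <= spectral_diag (cplx H) 0 k)%R]| =
  count (fun x => lam <= x)%R s.
Proof.
move=> H_sym spH; rewrite (card_spectral_diag (fun z => toC lam <= z) H_sym spH).
by apply: eq_count => x /=; rewrite lecR.
Qed.

Theorem cauchy_interlacing n m (H : 'M[R]_n) (f : 'I_m -> 'I_n) (s s' : seq R) :
  injective f -> H^T = H -> spectrum H s -> spectrum (mxsub f f H) s' ->
  forall i, (i < m)%N ->
    nth 0 s' i <= nth 0 s i /\ nth 0 s (n - m + i)%N <= nth 0 s' i.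
Proof.
move=> f_inj H_sym spH spB i lt_i_m.
have B_sym : (mxsub f f H)^T = mxsub f f H by rewrite trmx_mxsub H_sym.
have le_m_n : (m <= n)%N by have := leq_card f f_inj; rewrite !card_ord.
have [size_s size_s'] := (size_spectrum spH, size_spectrum spB).
set A := cplx H; set B := cplx (mxsub f f H).
have E_unitary := rowsub1_unitary R[i] f_inj.
have BE : B = congrmx (rowsub f 1%:M) A by rewrite congrmx_rowsub1 /B map_mxsub.
have PAP := congrmx_spectral (cplx_normalmx H_sym).
have QBQ : congrmx (spectralmx B) (congrmx (rowsub f 1%:M) A) =
            diag_mx (spectral_diag B).
  by rewrite -BE; exact: congrmx_spectral (cplx_normalmx B_sym).
have [P_unitary Q_unitary] := (spectral_unitarymx A, spectral_unitarymx B).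
split; rewrite -lecR.
- apply: (interlacing_count E_unitary P_unitary Q_unitary PAP QBQ).
  rewrite (card_spectral_diag_le _ H_sym spH) (card_spectral_diag_ge _ B_sym spB).
  have := count_le_nth (i := i) (proj1 spH).
  have := count_ge_nth (i := i) (proj1 spB).
  rewrite size_s size_s' => /(_ lt_i_m) ge_s' /(_ (leq_trans lt_i_m le_m_n)) le_s.
  apply: leq_trans (leq_add le_s ge_s'); lia.
- apply: (interlacing_count_opp E_unitary P_unitary Q_unitary PAP QBQ).
  rewrite (card_spectral_diag_ge _ H_sym spH) (card_spectral_diag_le _ B_sym spB).
  have := count_ge_nth (i := n - m + i) (proj1 spH).
  have := count_le_nth (i := i) (proj1 spB).
  have lt_j_n : (n - m + i < n)%N by lia.
  rewrite size_s size_s' => /(_ lt_i_m) le_s' /(_ lt_j_n) ge_s.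
  apply: leq_trans (leq_add ge_s le_s'); lia.
Qed.

End CauchyInterlacing.

Section Blocks.
Variables (T : finType) (adj : rel T).
Hypothesis adj_sym : symmetric adj.

Definition linked_in (A : {set T}) :=
  {in A &, forall x y, connect (induced_adj adj A) x y}.

Lemma linked_inP (A : {set T}) :
  reflect (linked_in A) [forall x in A, forall y in A, connect (induced_adj adj A) x y].
Proof.
apply: (iffP forall_inP) => [A_linked x y xA | A_linked x xA].
  by have /forall_inP := A_linked x xA; apply.
by apply/forall_inP => y; exact: A_linked.
Qed.

Lemma connected_in_linked (A : {set T}) : connected_in adj A -> linked_in A.
Proof. by case/andP=> _ /linked_inP. Qed.

Lemma no_cut_vertexP (A : {set T}) :
  reflect {in A, forall v, linked_in (A :\ v)} (no_cut_vertex adj A).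
Proof. by apply: (iffP forall_inP) => A_ncv v vA; apply/linked_inP/A_ncv. Qed.

Lemma induced_adj_sym (A : {set T}) : symmetric (induced_adj adj A).
Proof. by move=> x y; rewrite /induced_adj /= adj_sym [(x \in A) && _]andbC. Qed.

Lemma linked_setU1 (A : {set T}) w z :
  z \in A -> adj w z -> linked_in A -> linked_in (w |: A).
Proof.
move=> zA wz A_linked.
have conn_A : {in A &, forall a b, connect (induced_adj adj (w |: A)) a b}.
  move=> a b aA bA; apply: connect_sub (A_linked a b aA bA) => x y /and3P[xy xA yA].
  by apply: connect1; rewrite /induced_adj /= xy !inE xA yA !orbT.
have conn_z a : a \in w |: A -> connect (induced_adj adj (w |: A)) a z.
  case/setU1P => [-> | aA]; last exact: conn_A.
  by apply: connect1; rewrite /induced_adj /= wz !inE eqxx zA orbT.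
move=> a b aA bA; apply: connect_trans (conn_z a aA) _.
by rewrite (sym_connect_sym (induced_adj_sym _)) conn_z.
Qed.

Lemma block_common_neighbour (B : {set T}) x y w : is_block adj B ->
  x \in B -> y \in B -> x != y -> adj x w -> adj y w -> w \in B.
Proof.
case/maxsetP => /andP[B_conn B_ncv] B_max xB yB neq_xy xw yw.
case: (boolP (w \in B)) => // w_notin_B.
have [wx wy] : adj w x /\ adj w y by rewrite !(adj_sym w).
suff wB_block : connected_in adj (w |: B) && no_cut_vertex adj (w |: B).
  by move: (setU11 w B); rewrite (B_max _ wB_block (subsetUr _ _)) (negPf w_notin_B).
apply/andP; split.
  apply/andP; split; first by apply/set0Pn; exists w; exact: setU11.
  exact/linked_inP/(linked_setU1 xB wx)/connected_in_linked.
apply/no_cut_vertexP => v /setU1P[-> | vB].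
  by rewrite setU1K //; exact: connected_in_linked.
have neq_wv : w != v by apply: contraNneq _ w_notin_B => ->.
have -> : (w |: B) :\ v = w |: (B :\ v).
  by apply/setP => u; rewrite !inE; case: (eqVneq u w) => // ->; rewrite neq_wv.
have [z zBv wz] : exists2 z, z \in B :\ v & adj w z.
  case: (eqVneq v x) => [-> | neq_vx].
    by exists y; rewrite // !inE yB eq_sym neq_xy.
  by exists x; rewrite // !inE xB eq_sym neq_vx.
exact: linked_setU1 zBv wz (no_cut_vertexP _ B_ncv v vB).
Qed.

End Blocks.

Section Helmholtzian.
Variables (T : finType) (adj o : rel T).

Lemma ntri_formed_by_blocks S e : simple_graph adj -> formed_by_blocks adj S ->
  e \in oedges adj o S -> ntri adj setT e = ntri adj S e.
Proof.
case=> adj_irr adj_sym [Bs [Bs_blocks S_def Bs_edges]].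
rewrite inE => /and4P[e_adj _ e1S e2S].
have [B BsB /andP[e1B e2B]] := Bs_edges _ _ e1S e2S e_adj.
have neq_e : e.1 != e.2 by apply: contraTneq e_adj => ->; rewrite adj_irr.
apply: eq_card => w; rewrite !inE /=.
symmetry; apply/andb_idl => /andP[e1w e2w].
have wB := block_common_neighbour adj_sym (Bs_blocks B BsB) e1B e2B neq_e e1w e2w.
by rewrite S_def (subsetP (bigcup_sup B BsB)).
Qed.

Lemma etri_sym e e' : etri adj e e' = etri adj e' e.
Proof.
rewrite /etri.
suff -> : [set e.1; e.2; e'.1; e'.2] = [set e'.1; e'.2; e.1; e.2] :> {set T} by [].
by apply/setP => u; rewrite !inE -[LHS]orbA [LHS]orbC [LHS]orbA.
Qed.

Lemma helmholtzian_sym (R : numDomainType) S :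
  (helmholtzian R adj o S)^T = helmholtzian R adj o S.
Proof.
apply/matrixP => i j; rewrite !mxE /= eq_sym etri_sym.
case: eqVneq => [-> // | _]; rewrite /ehead_tail /esame_end orbC.
by rewrite [(enum_val j).2 == (enum_val i).2]eq_sym [(enum_val j).1 == _]eq_sym.
Qed.

Lemma oedges_subT S : oedges adj o S \subset oedges adj o setT.
Proof. by apply/subsetP => e; rewrite !inE => /and4P[-> -> _ _]. Qed.

Lemma helmholtzian_formed_by_blocks (R : numDomainType) S :
  simple_graph adj -> formed_by_blocks adj S ->
  exists2 f : 'I_#|oedges adj o S| -> 'I_#|oedges adj o setT|, injective f &
    helmholtzian R adj o S = mxsub f f (helmholtzian R adj o setT).
Proof.
move=> adj_simple S_blocks.
have inT (i : 'I_#|oedges adj o S|) : enum_val i \in oedges adj o setT.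
  exact: subsetP (oedges_subT S) _ (enum_valP i).
pose f i := enum_rank_in (inT i) (enum_val i).
have fK i : enum_val (f i) = enum_val i by rewrite enum_rankK_in.
have f_inj : injective f by move=> i j /(congr1 enum_val); rewrite !fK => /enum_val_inj.
exists f => //; apply/matrixP => i j; rewrite !mxE /= !fK (inj_eq f_inj).
by rewrite (ntri_formed_by_blocks adj_simple S_blocks (enum_valP i)).
Qed.

End Helmholtzian.

Theorem corollary4p5 (R : rcfType) (T : finType) (adj o : rel T) (S : {set T})
  (s s' : seq R) :
  simple_graph adj ->
  orientation adj o ->
  formed_by_blocks adj S ->
  (1 <= #|oedges adj o setT|)%N ->
  (1 <= #|oedges adj o S|)%N ->
  spectrum (helmholtzian R adj o setT) s ->
  spectrum (helmholtzian R adj o S) s' ->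
  forall i : nat, (i < #|oedges adj o S|)%N ->
    nth 0 s' i <= nth 0 s i /\
    nth 0 s (#|oedges adj o setT| - #|oedges adj o S| + i)%N <= nth 0 s' i.
Proof.
(* Neither the orientation nor the edge counts matter: interlacing holds for
   every principal submatrix. *)
move=> adj_simple _ S_blocks _ _ spT spS.
have [f f_inj S_sub] := helmholtzian_formed_by_blocks o R adj_simple S_blocks.
rewrite S_sub in spS.
exact: cauchy_interlacing f_inj (helmholtzian_sym _ _ _ _) spT spS.
Qed.
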